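(* Let $\gamma>0$, $s>0$, $u\ge\gamma$ and $v\in\mathbb{R}$. Let $G(u,v;s)=(u^2+v^2)^{-s}$ and $D_1=\partial/\partial u$. Then for $j\ge1$, $$\frac{D_1^jG(u,v;s)}{G(u,v;s)}=\frac{P_j(u,v;s)}{(u^2+v^2)^j},$$ where $P_j$ are the polynomials defined by $P_1(u,v;s)=-2su$ and $P_{m+1}(u,v;s)=(u^2+v^2)\frac{\partial P_m}{\partial u}(u,v;s)-2(s+m)uP_m(u,v;s)$; and $$-\frac{2s}{\gamma}\le\frac{D_1G}{G}<0,\qquad -\frac{s}{4\gamma^2(s+1)}\le\frac{D_1^2G}{G}\le\frac{2s(2s+1)}{\gamma^2},$$ $$-\frac{2s(2s+1)(2s+2)}{\gamma^3}\le\frac{D_1^3G}{G}\le\frac{2s(2s+2)}{\gamma^3(s+2)^2},$$ $$-\frac{2s(s+1)(2s+2)\cdot3}{\gamma^4}\le\frac{D_1^4G}{G}\le\frac{2s(2s+1)(2s+2)(2s+3)}{\gamma^4},$$ where all quotients are evaluated at $(u,v;s)$. *)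

From Stdlib Require Import Reals.
From Coquelicot Require Import Coquelicot.
Open Scope R_scope.

Definition G (u v s : R) : R := Rpower (u ^ 2 + v ^ 2) (- s).

(* P m v s u = P_m(u,v;s): P_1 = -2 s u,
   P_{m+1} = (u^2+v^2) dP_m/du - 2 (s+m) u P_m.  (P_0 is unused, set to 0.) *)
Fixpoint P (m : nat) (v s : R) : R -> R :=
  match m with
  | O => fun _ => 0
  | S m' =>
      match m' with
      | O => fun u => - 2 * s * u
      | S _ => fun u =>
          (u ^ 2 + v ^ 2) * Derive (P m' v s) u
          - 2 * (s + INR m') * u * P m' v s u
      end
  end.

Definition DjG_over_G (j : nat) (u v s : R) : R :=
  Derive_n (fun x => G x v s) j u / G u v s.

From Stdlib Require Import Reals Lra Lia.
From Coquelicot Require Import Coquelicot.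
Open Scope R_scope.

(* With r = u^2 + v^2 we have G = r^(-s), and differentiating
   P_j r^(-(s+j)) gives (r P_j' - 2 (s+j) u P_j) r^(-(s+j+1)), i.e. exactly
   P_(j+1) r^(-(s+j+1)): this is the formula for D_1^j G / G.  For the bounds
   put t = u^2 / r, which lies in (0, 1].  For j <= 4 the quotient
   P_j / r^j equals p_j(t) / u^j for an explicit polynomial p_j, so it suffices
   to bound p_j on [0, 1] and to use u >= gamma. *)

(* Coquelicot's [Derive] is total (it is 0 where f is not differentiable), so
   unfolding the recursion for [P] needs every [P m] to be differentiable. *)
Inductive poly_fun : (R -> R) -> Prop :=
  | poly_const (c : R) : poly_fun (fun _ => c)
  | poly_id : poly_fun (fun x => x)
  | poly_plus (f g : R -> R) :
      poly_fun f -> poly_fun g -> poly_fun (fun x => f x + g x)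
  | poly_mult (f g : R -> R) :
      poly_fun f -> poly_fun g -> poly_fun (fun x => f x * g x)
  | poly_ext (f g : R -> R) :
      poly_fun f -> (forall x, f x = g x) -> poly_fun g.

Lemma poly_fun_is_derive (f : R -> R) :
  poly_fun f -> exists2 df, poly_fun df & forall x, is_derive f x (df x).
Proof.
  induction 1 as [c| |f g _ [df Hdf Df] _ [dg Hdg Dg]
                 |f g Hf [df Hdf Df] Hg [dg Hdg Dg]|f g _ [df Hdf Df] Efg].
  - exists (fun _ => 0); [apply poly_const|]. intros x; auto_derive; auto.
  - exists (fun _ => 1); [apply poly_const|]. intros x; auto_derive; auto.
  - exists (fun x => df x + dg x); [apply poly_plus; assumption|].
    intros x; exact (is_derive_plus f g x _ _ (Df x) (Dg x)).
  - exists (fun x => df x * g x + f x * dg x).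
    + apply poly_plus; apply poly_mult; assumption.
    + intros x; exact (is_derive_mult f g x _ _ (Df x) (Dg x) Rmult_comm).
  - exists df; [exact Hdf|]. intros x; exact (is_derive_ext _ _ _ _ Efg (Df x)).
Qed.

Lemma poly_fun_ex_derive (f : R -> R) (x : R) : poly_fun f -> ex_derive f x.
Proof. intros Hf; destruct (poly_fun_is_derive f Hf) as [df _ Df]; exists (df x); apply Df. Qed.

Lemma poly_fun_Derive (f : R -> R) : poly_fun f -> poly_fun (Derive f).
Proof.
  intros Hf; destruct (poly_fun_is_derive f Hf) as [df Hdf Df].
  apply (poly_ext df); [exact Hdf|]. intros x; symmetry; apply is_derive_unique, Df.
Qed.

Lemma poly_fun_P (m : nat) (v s : R) : poly_fun (P m v s).
Proof.
  induction m as [|[|m] IH].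
  - exact (poly_const 0).
  - apply (poly_ext (fun u => (- 2 * s) * u)); [apply poly_mult; constructor|].
    intros u; reflexivity.
  - set (c := 2 * (s + INR (S m))).
    apply (poly_ext (fun u => (u * u + v ^ 2) * Derive (P (S m) v s) u
                              + (- c * u) * P (S m) v s u)).
    + apply poly_plus; apply poly_mult.
      * apply poly_plus; [apply poly_mult; apply poly_id|apply poly_const].
      * apply poly_fun_Derive, IH.
      * apply poly_mult; [apply poly_const|apply poly_id].
      * exact IH.
    + intros u; cbn [P]; unfold c; ring.
Qed.

Lemma Rpower_opp_succ (r a : R) : 0 < r -> Rpower r (- (a + 1)) = Rpower r (- a) / r.
Proof.
  intros Hr. rewrite Ropp_plus_distr, Rpower_plus, (Rpower_Ropp r 1), Rpower_1 by exact Hr.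
  reflexivity.
Qed.

Section Derivatives.
Variables v s : R.

Lemma is_derive_mult_Rpower (f : R -> R) (a x : R) :
  0 < x ^ 2 + v ^ 2 -> ex_derive f x ->
  is_derive (fun y => f y * Rpower (y ^ 2 + v ^ 2) (- a)) x
    (((x ^ 2 + v ^ 2) * Derive f x - 2 * a * x * f x) * Rpower (x ^ 2 + v ^ 2) (- (a + 1))).
Proof.
  intros Hr Hf. rewrite Rpower_opp_succ by exact Hr. unfold Rpower.
  auto_derive; [split; [exact Hf|split; [nra|exact I]]|].
  replace (x * (x * 1) + v * (v * 1)) with (x ^ 2 + v ^ 2) by ring.
  change (fun y => f y) with f. field; nra.
Qed.

Lemma locally_sumsq_pos (x : R) :
  0 < x ^ 2 + v ^ 2 -> locally x (fun y => 0 < y ^ 2 + v ^ 2).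
Proof.
  intros Hr. apply (ex_derive_continuous (fun y => y ^ 2 + v ^ 2)).
  - auto_derive; exact I.
  - apply open_gt, Hr.
Qed.

Lemma Derive_n_G (k : nat) (x : R) : 0 < x ^ 2 + v ^ 2 ->
  Derive_n (fun y => G y v s) (S k) x = P (S k) v s x * Rpower (x ^ 2 + v ^ 2) (- (s + INR (S k))).
Proof.
  revert x; induction k as [|k IH]; intros x Hr.
  - apply is_derive_unique.
    apply (is_derive_ext (fun y => 1 * Rpower (y ^ 2 + v ^ 2) (- s))).
    { intros y; apply Rmult_1_l. }
    replace (P 1 v s x) with ((x ^ 2 + v ^ 2) * Derive (fun _ => 1) x - 2 * s * x * 1).
    + apply is_derive_mult_Rpower; [exact Hr|apply ex_derive_const].
    + rewrite Derive_const; simpl; ring.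
  - cbn [Derive_n].
    rewrite (Derive_ext_loc _ (fun y => P (S k) v s y * Rpower (y ^ 2 + v ^ 2) (- (s + INR (S k))))).
    + replace (s + INR (S (S k))) with (s + INR (S k) + 1) by (rewrite (S_INR (S k)); ring).
      apply is_derive_unique, is_derive_mult_Rpower; [exact Hr|].
      apply poly_fun_ex_derive, poly_fun_P.
    + apply (filter_imp (fun y => 0 < y ^ 2 + v ^ 2)); [apply IH|apply locally_sumsq_pos, Hr].
Qed.

Lemma DjG_over_G_P (j : nat) (u : R) : (1 <= j)%nat -> 0 < u ^ 2 + v ^ 2 ->
  DjG_over_G j u v s = P j v s u / (u ^ 2 + v ^ 2) ^ j.
Proof.
  intros Hj Hr. destruct j as [|k]; [lia|].
  assert (HG : 0 < G u v s) by apply exp_pos.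
  unfold DjG_over_G. rewrite Derive_n_G by exact Hr.
  rewrite Ropp_plus_distr, Rpower_plus, (Rpower_Ropp _ (INR (S k))), Rpower_pow by exact Hr.
  fold (G u v s). field. split; [apply pow_nonzero|]; lra.
Qed.

Lemma P_2_eq (u : R) : P 2 v s u = - 2 * s * (u ^ 2 + v ^ 2) + 4 * s * (s + 1) * u ^ 2.
Proof.
  cbn [P]. replace (Derive (fun u => - 2 * s * u) u) with (- 2 * s).
  - simpl; ring.
  - symmetry; apply is_derive_unique; auto_derive; [exact I|ring].
Qed.

Lemma P_3_eq (u : R) :
  P 3 v s u = 4 * s * (s + 1) * u * (3 * (u ^ 2 + v ^ 2) - 2 * (s + 2) * u ^ 2).
Proof.
  change (P 3 v s u) with
    ((u ^ 2 + v ^ 2) * Derive (P 2 v s) u - 2 * (s + INR 2) * u * P 2 v s u).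
  rewrite (Derive_ext _ _ _ P_2_eq), P_2_eq.
  replace (Derive _ u) with (4 * s * (2 * s + 1) * u).
  - simpl; ring.
  - symmetry; apply is_derive_unique; auto_derive; [exact I|ring].
Qed.

Lemma P_4_eq (u : R) :
  P 4 v s u = 4 * s * (s + 1) * (3 * (u ^ 2 + v ^ 2) ^ 2
              - 12 * (s + 2) * u ^ 2 * (u ^ 2 + v ^ 2) + 4 * (s + 2) * (s + 3) * u ^ 4).
Proof.
  change (P 4 v s u) with
    ((u ^ 2 + v ^ 2) * Derive (P 3 v s) u - 2 * (s + INR 3) * u * P 3 v s u).
  rewrite (Derive_ext _ _ _ P_3_eq), P_3_eq.
  replace (Derive _ u) with (12 * s * (s + 1) * (u ^ 2 + v ^ 2) - 24 * s * (s + 1) ^ 2 * u ^ 2).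
  - simpl; ring.
  - symmetry; apply is_derive_unique; auto_derive; [exact I|ring].
Qed.

End Derivatives.

Section UnitInterval.
Variables s t : R.
Hypotheses (Hs : 0 < s) (Ht0 : 0 <= t) (Ht1 : t <= 1).

Lemma quadratic_bounds :
  - (s / (4 * (s + 1))) <= - 2 * s * t + 4 * s * (s + 1) * t ^ 2 <= 2 * s * (2 * s + 1).
Proof.
  split.
  - (* the minimum is attained at t = 1 / (4 (s + 1)) *)
    assert (Hsq : 0 <= s * (4 * (s + 1) * t - 1) ^ 2) by (apply Rmult_le_pos; [lra|apply pow2_ge_0]).
    apply (Rmult_le_reg_r (4 * (s + 1))); [lra|].
    replace (- (s / (4 * (s + 1))) * (4 * (s + 1))) with (- s) by (field; lra).
    nra.
  - assert (0 <= s * (1 - t) * (2 * (s + 1) * (1 + t) - 1))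
      by (apply Rmult_le_pos; [apply Rmult_le_pos|]; nra).
    nra.
Qed.

Lemma cubic_bounds :
  - (2 * s + 1) <= t ^ 2 * (3 - 2 * (s + 2) * t) <= 1 / (s + 2) ^ 2.
Proof.
  split.
  - assert (0 <= (1 - t) * (2 * (s + 2) * t ^ 2 + (2 * s + 1) * t + (2 * s + 1)))
      by (apply Rmult_le_pos; nra).
    nra.
  - (* the maximum is attained at t = 1 / (s + 2) *)
    assert (Hsq : 0 <= ((s + 2) * t - 1) ^ 2 * (2 * (s + 2) * t + 1))
      by (apply Rmult_le_pos; [apply pow2_ge_0|nra]).
    apply (Rmult_le_reg_r ((s + 2) ^ 2)); [nra|].
    replace (1 / (s + 2) ^ 2 * (s + 2) ^ 2) with 1 by (field; lra).
    nra.
Qed.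

Lemma quartic_bounds :
  - (3 * (s + 1)) <= t ^ 2 * (3 - 12 * (s + 2) * t + 4 * (s + 2) * (s + 3) * t ^ 2)
  <= (2 * s + 1) * (2 * s + 3).
Proof.
  assert (Ht2 : 0 <= t ^ 2 <= 1) by nra.
  split.
  - (* (s+3) (p + 3 (s+1)) = (s+2) t^2 (2 (s+3) t - 3)^2 + 3 (s+1) (s+3) - (6 s + 9) t^2,
       where p is the quartic *)
    assert (Hsq : 0 <= (s + 2) * t ^ 2 * (2 * (s + 3) * t - 3) ^ 2)
      by (apply Rmult_le_pos; [apply Rmult_le_pos|apply pow2_ge_0]; lra).
    assert (0 <= (6 * s + 9) * (1 - t ^ 2)) by (apply Rmult_le_pos; lra).
    apply (Rmult_le_reg_r (s + 3)); [lra|].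
    nra.
  - set (g := 3 - 12 * (s + 2) * t + 4 * (s + 2) * (s + 3) * t ^ 2).
    set (K := (2 * s + 1) * (2 * s + 3)).
    (* g is convex with g 0 = 3 <= K = g 1 *)
    assert (HgK : g <= K).
    { assert (0 <= (s + 2) * (1 - t) * ((s + 3) * (1 + t) - 3))
        by (apply Rmult_le_pos; [apply Rmult_le_pos|]; nra).
      unfold g, K; nra. }
    assert (0 <= K) by (unfold K; nra).
    assert (0 <= t ^ 2 * (K - g)) by (apply Rmult_le_pos; lra).
    assert (0 <= (1 - t ^ 2) * K) by (apply Rmult_le_pos; lra).
    nra.
Qed.

End UnitInterval.

Lemma div_pow_bounds (j : nat) (g u c C q : R) :
  0 < g -> g <= u -> 0 <= c -> 0 <= C -> - c <= q <= C ->
  - (c / g ^ j) <= q / u ^ j <= C / g ^ j.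
Proof.
  intros Hg Hgu Hc HC [Hlo Hhi].
  assert (Hgj : 0 < g ^ j) by (apply pow_lt; lra).
  assert (Hguj : g ^ j <= u ^ j) by (apply pow_incr; lra).
  assert (Hinv : / u ^ j <= / g ^ j) by (apply Rinv_le_contravar; lra).
  assert (Huj : 0 < / u ^ j) by (apply Rinv_0_lt_compat; lra).
  unfold Rdiv; split; nra.
Qed.

Section BoundsAtPoint.
Variables gamma s u v : R.
Hypotheses (hgamma : 0 < gamma) (hs : 0 < s) (hu : gamma <= u).

Let r := u ^ 2 + v ^ 2.
Let t := u ^ 2 / r.

Let u_pos : 0 < u. Proof. lra. Qed.
Let r_pos : 0 < r. Proof. unfold r; nra. Qed.
Let t_bounds : 0 < t <= 1.
Proof.
  unfold t; split; [apply Rdiv_lt_0_compat; [nra|exact r_pos]|].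
  apply (Rdiv_le_1 _ _ r_pos); unfold r; nra.
Qed.

Lemma DjG_over_G_1_bounds : - (2 * s / gamma) <= DjG_over_G 1 u v s < 0.
Proof.
  rewrite DjG_over_G_P by (fold r; lia || lra); fold r.
  replace (P 1 v s u / r ^ 1) with (- 2 * s * t / u ^ 1) by (unfold t; simpl; field; lra).
  replace (2 * s / gamma) with (2 * s / gamma ^ 1) by (simpl; field; lra).
  split.
  - apply (div_pow_bounds 1 gamma u (2 * s) 0); nra.
  - assert (0 < s * t / u ^ 1) by (apply Rdiv_lt_0_compat; [apply Rmult_lt_0_compat|simpl]; lra).
    lra.
Qed.

Lemma DjG_over_G_2_bounds :
  - (s / (4 * gamma ^ 2 * (s + 1))) <= DjG_over_G 2 u v s
  <= 2 * s * (2 * s + 1) / gamma ^ 2.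
Proof.
  rewrite DjG_over_G_P by (fold r; lia || lra); fold r.
  replace (P 2 v s u / r ^ 2) with ((- 2 * s * t + 4 * s * (s + 1) * t ^ 2) / u ^ 2)
    by (rewrite P_2_eq; unfold t; fold r; field; lra).
  replace (s / (4 * gamma ^ 2 * (s + 1))) with (s / (4 * (s + 1)) / gamma ^ 2)
    by (field; lra).
  apply div_pow_bounds; try lra.
  - apply Rlt_le, Rdiv_lt_0_compat; lra.
  - nra.
  - apply quadratic_bounds; lra.
Qed.

Lemma DjG_over_G_3_bounds :
  - (2 * s * (2 * s + 1) * (2 * s + 2) / gamma ^ 3) <= DjG_over_G 3 u v s
  <= 2 * s * (2 * s + 2) / (gamma ^ 3 * (s + 2) ^ 2).
Proof.
  rewrite DjG_over_G_P by (fold r; lia || lra); fold r.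
  replace (P 3 v s u / r ^ 3) with (4 * s * (s + 1) * (t ^ 2 * (3 - 2 * (s + 2) * t)) / u ^ 3)
    by (rewrite P_3_eq; unfold t; fold r; field; lra).
  replace (2 * s * (2 * s + 2) / (gamma ^ 3 * (s + 2) ^ 2))
    with (4 * s * (s + 1) * (1 / (s + 2) ^ 2) / gamma ^ 3) by (field; lra).
  replace (2 * s * (2 * s + 1) * (2 * s + 2)) with (4 * s * (s + 1) * (2 * s + 1)) by ring.
  assert (Hk : 0 < 4 * s * (s + 1)) by nra.
  assert (Hc : 0 < 1 / (s + 2) ^ 2) by (apply Rdiv_lt_0_compat; nra).
  destruct (cubic_bounds s t) as [lo hi]; try lra.
  apply div_pow_bounds; try split; nra.
Qed.

Lemma DjG_over_G_4_bounds :
  - (2 * s * (s + 1) * (2 * s + 2) * 3 / gamma ^ 4) <= DjG_over_G 4 u v s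
  <= 2 * s * (2 * s + 1) * (2 * s + 2) * (2 * s + 3) / gamma ^ 4.
Proof.
  rewrite DjG_over_G_P by (fold r; lia || lra); fold r.
  replace (P 4 v s u / r ^ 4) with (4 * s * (s + 1)
      * (t ^ 2 * (3 - 12 * (s + 2) * t + 4 * (s + 2) * (s + 3) * t ^ 2)) / u ^ 4)
    by (rewrite P_4_eq; unfold t; fold r; field; lra).
  replace (2 * s * (s + 1) * (2 * s + 2) * 3) with (4 * s * (s + 1) * (3 * (s + 1))) by ring.
  replace (2 * s * (2 * s + 1) * (2 * s + 2) * (2 * s + 3))
    with (4 * s * (s + 1) * ((2 * s + 1) * (2 * s + 3))) by ring.
  assert (Hk : 0 < 4 * s * (s + 1)) by nra.
  destruct (quartic_bounds s t) as [lo hi]; try lra.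
  apply div_pow_bounds; try split; nra.
Qed.

End BoundsAtPoint.

Theorem lemma5p6 (gamma s u v : R) (hgamma : 0 < gamma) (hs : 0 < s)
  (hu : gamma <= u) :
  (forall j : nat, (1 <= j)%nat ->
     DjG_over_G j u v s = P j v s u / (u ^ 2 + v ^ 2) ^ j) /\
  (- (2 * s / gamma) <= DjG_over_G 1 u v s /\ DjG_over_G 1 u v s < 0) /\
  (- (s / (4 * gamma ^ 2 * (s + 1))) <= DjG_over_G 2 u v s /\
     DjG_over_G 2 u v s <= 2 * s * (2 * s + 1) / gamma ^ 2) /\
  (- (2 * s * (2 * s + 1) * (2 * s + 2) / gamma ^ 3) <= DjG_over_G 3 u v s /\
     DjG_over_G 3 u v s <= 2 * s * (2 * s + 2) / (gamma ^ 3 * (s + 2) ^ 2)) /\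
  (- (2 * s * (s + 1) * (2 * s + 2) * 3 / gamma ^ 4) <= DjG_over_G 4 u v s /\
     DjG_over_G 4 u v s <= 2 * s * (2 * s + 1) * (2 * s + 2) * (2 * s + 3) / gamma ^ 4).
Proof.
  split; [intros j Hj; apply DjG_over_G_P; [exact Hj|nra]|].
  split; [exact (DjG_over_G_1_bounds gamma s u v hgamma hs hu)|].
  split; [exact (DjG_over_G_2_bounds gamma s u v hgamma hs hu)|].
  split; [exact (DjG_over_G_3_bounds gamma s u v hgamma hs hu)|].
  exact (DjG_over_G_4_bounds gamma s u v hgamma hs hu).
Qed.
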